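(* Let $x^*\in\mathbb{R}^n$ satisfy $Ax^*=b$, and let $x\in\mathbb{R}^n$ with $P(x)\neq x$. Then the function $s\mapsto\|(1-s)x+sP(x)-x^*\|^2$ on $\mathbb{R}$ has a unique minimizer \[s^*=\frac12+\frac{\|r(x)\|^2}{2\|P(x)-x\|^2},\] and \[\|x-x^*\|^2-\|(1-s^* )x+s^*P(x)-x^*\|^2=\frac{(\|r(x)\|^2+\|P(x)-x\|^2)^2}{4\|P(x)-x\|^2}.\]
   Context: Let $A=(a_1,\ldots,a_m)^T\in\mathbb{R}^{m\times n}$ with rows $a_j\in\mathbb{R}^n\setminus\{0\}$, and let $b\in\mathbb{R}^m$ lie in the range of $A$. Norms are Euclidean. For $j=1,\ldots,m$ define the projectors $P_j:\mathbb{R}^n\to\mathbb{R}^n$, $P_j(x)=\big(I-\frac{a_ja_j^T}{\|a_j\|^2}\big)x+\frac{b_j}{\|a_j\|^2}a_j$ (the orthogonal projection onto $\{z:a_j^Tz=b_j\}$), and the Kaczmarz cycle $P=P_m\circ\cdots\circ P_1$. The residual $r:\mathbb{R}^n\to\mathbb{R}^m$ is defined by $r_1(x)=(a_1^Tx-b_1)/\|a_1\|$ and $r_j(x)=(a_j^T(P_{j-1}\circ\cdots\circ P_1)(x)-b_j)/\|a_j\|$ for $j=2,\ldots,m$. *)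

From HB Require Import structures.
From mathcomp Require Import all_boot all_order all_algebra.
Set Implicit Arguments. Unset Strict Implicit. Unset Printing Implicit Defensive.
Import Order.TTheory GRing.Theory Num.Theory.
Local Open Scope ring_scope.

Section Kaczmarz.
Variables (R : rcfType) (m n : nat).

Definition dotv (u v : 'cV[R]_n) : R := \sum_(i < n) u i 0 * v i 0.
Definition sqnorm {k : nat} (v : 'cV[R]_k) : R := \sum_(i < k) (v i 0) ^+ 2.
Definition normv {k : nat} (v : 'cV[R]_k) : R := Num.sqrt (sqnorm v).

Definition arow (A : 'M[R]_(m, n)) (j : 'I_m) : 'cV[R]_n := (row j A)^T.

Definition proj (A : 'M[R]_(m, n)) (b : 'cV[R]_m) (j : 'I_m) (x : 'cV[R]_n)
  : 'cV[R]_n :=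
  x - (dotv (arow A j) x / sqnorm (arow A j)) *: arow A j
    + (b j 0 / sqnorm (arow A j)) *: arow A j.

(* P_{k-1} o ... o P_1 applied to x (indices 0-based: first k projectors) *)
Definition Ppart (A : 'M[R]_(m, n)) (b : 'cV[R]_m) (k : nat) (x : 'cV[R]_n)
  : 'cV[R]_n :=
  foldl (fun y j => proj A b j y) x (take k (enum 'I_m)).

Definition kcycle (A : 'M[R]_(m, n)) (b : 'cV[R]_m) (x : 'cV[R]_n) : 'cV[R]_n :=
  Ppart A b m x.

Definition resid (A : 'M[R]_(m, n)) (b : 'cV[R]_m) (x : 'cV[R]_n) : 'cV[R]_m :=
  \col_(j < m) ((dotv (arow A j) (Ppart A b j x) - b j 0) / normv (arow A j)).

End Kaczmarz.

(* Each projector P_j moves its argument onto a hyperplane containing x*, so by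
   Pythagoras it lowers the squared distance to x* by exactly r_j(x)^2; over a
   full cycle, ||x - x*||^2 - ||P(x) - x*||^2 = ||r(x)||^2.  Along the line
   through x and P(x) the squared distance to x* is a quadratic in s with
   leading coefficient ||P(x) - x||^2 > 0, whose values at s = 0 and s = 1
   differ by ||r(x)||^2; this pins down its vertex and its minimum. *)

From HB Require Import structures.
From mathcomp Require Import all_boot all_order all_algebra.
From mathcomp Require Import ring.
Import Order.TTheory GRing.Theory Num.Theory.
Local Open Scope ring_scope.

Section SquaredNorm.
Variables (R : rcfType) (n : nat).
Implicit Types (u v : 'cV[R]_n) (s : R).

Lemma sqnorm_ge0 u : 0 <= sqnorm u.
Proof. by apply: sumr_ge0 => i _; rewrite sqr_ge0. Qed.

Lemma sqnorm_gt0 u : u != 0 -> 0 < sqnorm u.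
Proof.
move=> u_neq0; rewrite lt_def sqnorm_ge0 andbT; apply: contraNneq u_neq0 => u0.
apply/eqP/matrixP => i j; rewrite (ord1 j) mxE.
have := psumr_eq0P (fun k _ => sqr_ge0 (u k 0)) u0 (i := i) isT.
by move/eqP; rewrite sqrf_eq0 => /eqP.
Qed.

Lemma sqnormDZ u v s :
  sqnorm (u + s *: v) = sqnorm u + 2 * s * dotv u v + s ^+ 2 * sqnorm v.
Proof.
rewrite /sqnorm /dotv !mulr_sumr -!big_split /=.
by apply: eq_bigr => i _; rewrite !mxE; ring.
Qed.

End SquaredNorm.

Arguments sqnorm_ge0 {R n}.
Arguments sqnorm_gt0 {R n u}.
Arguments sqnormDZ {R n}.

Section Kaczmarz.
Variables (R : rcfType) (m n : nat) (A : 'M[R]_(m, n)) (b : 'cV[R]_m).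
Hypothesis rows_neq0 : forall j : 'I_m, arow A j != 0.
Variable xs : 'cV[R]_n.
Hypothesis solves : A *m xs = b.

Lemma dotv_arow_sub (j : 'I_m) (y : 'cV[R]_n) :
  dotv (y - xs) (arow A j) = dotv (arow A j) y - b j 0.
Proof.
rewrite -solves mxE /dotv -sumrB.
by apply: eq_bigr => i _; rewrite !mxE; ring.
Qed.

Lemma sqnorm_proj_sub (j : 'I_m) (y : 'cV[R]_n) :
  sqnorm (y - xs) - sqnorm (proj A b j y - xs) =
  ((dotv (arow A j) y - b j 0) / normv (arow A j)) ^+ 2.
Proof.
set a := arow A j; have a_gt0 : 0 < sqnorm a := sqnorm_gt0 (rows_neq0 j).
set c := (dotv a y - b j 0) / sqnorm a.
have -> : proj A b j y - xs = (y - xs) + (- c) *: a.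
  by apply/matrixP => i k; rewrite /proj /c -/a !mxE; ring.
rewrite sqnormDZ dotv_arow_sub -/a /c expr_div_n sqr_sqrtr ?sqnorm_ge0 //.
by field; rewrite gt_eqF.
Qed.

Lemma PpartS (k : nat) (lt_km : (k < m)%N) (y : 'cV[R]_n) :
  Ppart A b k.+1 y = proj A b (Ordinal lt_km) (Ppart A b k y).
Proof.
rewrite /Ppart (take_nth (Ordinal lt_km)) ?size_enum_ord // foldl_rcons.
by congr proj; apply: val_inj; rewrite /= nth_enum_ord.
Qed.

Lemma sqnorm_Ppart_sub (y : 'cV[R]_n) (k : nat) : (k <= m)%N ->
  sqnorm (y - xs) - sqnorm (Ppart A b k y - xs) =
  \sum_(j <- take k (enum 'I_m)) resid A b y j 0 ^+ 2.
Proof.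
elim: k => [|k IHk] lt_km; first by rewrite /Ppart take0 big_nil subrr.
have nth_k : nth (Ordinal lt_km) (enum 'I_m) k = Ordinal lt_km.
  by apply: val_inj; rewrite /= nth_enum_ord.
rewrite (take_nth (Ordinal lt_km)) ?size_enum_ord // nth_k -cats1 big_cat big_seq1.
rewrite -IHk ?(ltnW lt_km) // PpartS mxE -sqnorm_proj_sub.
by rewrite /= addrA subrK.
Qed.

Lemma sqnorm_kcycle_sub (y : 'cV[R]_n) :
  sqnorm (y - xs) - sqnorm (kcycle A b y - xs) = sqnorm (resid A b y).
Proof.
rewrite sqnorm_Ppart_sub // take_oversize ?size_enum_ord //.
by rewrite big_enum.
Qed.

End Kaczmarz.

Arguments sqnorm_kcycle_sub {R m n A b} rows_neq0 {xs} solves y.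

Section LineSearch.
Variables (R : rcfType) (n : nat) (x p z : 'cV[R]_n).
Hypothesis p_neq_x : p != x.

Let d := sqnorm (p - x).
Let r := sqnorm (x - z) - sqnorm (p - z).
Let f (s : R) := sqnorm ((1 - s) *: x + s *: p - z).

Lemma sqnorm_segment_expand (s : R) :
  f s = sqnorm (x - z) + 2 * s * dotv (x - z) (p - x) + s ^+ 2 * d.
Proof.
rewrite /f -sqnormDZ; congr sqnorm.
by apply/matrixP => i j; rewrite !mxE; ring.
Qed.

Lemma sqnorm_segment_vertex (s : R) :
  f s = f (1 / 2 + r / (2 * d)) + d * (s - (1 / 2 + r / (2 * d))) ^+ 2.
Proof.
have d_gt0 : 0 < d by apply: sqnorm_gt0; rewrite subr_eq0.
have f1 : sqnorm (p - z) = f 1 by rewrite /f subrr scale0r add0r scale1r.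
have dotE : dotv (x - z) (p - x) = (- r - d) / 2.
  by rewrite /r f1 sqnorm_segment_expand; field.
rewrite !sqnorm_segment_expand dotE.
by field; rewrite gt_eqF.
Qed.

End LineSearch.

Arguments sqnorm_segment_vertex {R n x p} z p_neq_x s.

Theorem theorem4 (R : rcfType) (m n : nat) (A : 'M[R]_(m, n)) (b : 'cV[R]_m)
  (hrows : forall j : 'I_m, arow A j != 0)
  (hb : exists z : 'cV[R]_n, A *m z = b)
  (xs : 'cV[R]_n) (hxs : A *m xs = b)
  (x : 'cV[R]_n) (hPx : kcycle A b x != x) :
  let f := fun s : R => sqnorm ((1 - s) *: x + s *: kcycle A b x - xs) in
  let sstar := 1 / 2 + sqnorm (resid A b x) / (2 * sqnorm (kcycle A b x - x)) in
  (forall s : R, s != sstar -> f sstar < f s) /\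
  sqnorm (x - xs) - f sstar =
    (sqnorm (resid A b x) + sqnorm (kcycle A b x - x)) ^+ 2
      / (4 * sqnorm (kcycle A b x - x)).
Proof.
move=> f sstar.
have d_gt0 : 0 < sqnorm (kcycle A b x - x) by apply: sqnorm_gt0; rewrite subr_eq0.
have vertex s : f s = f sstar + sqnorm (kcycle A b x - x) * (s - sstar) ^+ 2.
  rewrite /f /sstar -(sqnorm_kcycle_sub hrows hxs x).
  exact: sqnorm_segment_vertex xs hPx s.
split=> [s s_neq|].
  rewrite (vertex s) ltrDl mulr_gt0 // lt0r sqr_ge0 andbT sqrf_eq0 subr_eq0.
  exact: s_neq.
have -> : sqnorm (x - xs) = f 0 by rewrite /f subr0 scale1r scale0r addr0.
rewrite (vertex 0) addrC addKr /sstar.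
by field; rewrite gt_eqF.
Qed.
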